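(* Assume that $d_k^2 < 2p_{k+1}$ for every $k\geq1$. Then for every $n\geq 1$, $d_n \leq 2\lfloor\sqrt{p_n}\rfloor$; moreover, if $d_n = 2\lfloor \sqrt{p_n}\rfloor$ then $\lfloor\sqrt{p_{n+1}}\rfloor = \lfloor\sqrt{p_n}\rfloor + 1$.
   Context: $p_k$ denotes the $k$th prime ($p_1=2$) and $d_k := p_{k+1}-p_k$. *)

From mathcomp Require Import all_boot.
Set Implicit Arguments. Unset Strict Implicit. Unset Printing Implicit Defensive.

Lemma exists_prime_gt (m : nat) : exists p, (m < p) && prime p.
Proof.
have hp : prime (pdiv m`!.+1) by rewrite pdiv_prime // ltnS fact_gt0.
exists (pdiv m`!.+1); rewrite hp andbT ltnNge; apply/negP => le_pm.
have h1 : pdiv m`!.+1 %| m`! by rewrite dvdn_fact // prime_gt0.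
have h2 : pdiv m`!.+1 %| m`!.+1 by apply: pdiv_dvd.
move: h2; rewrite -[m`!.+1 in X in _ %| X]addn1 (dvdn_addr _ h1) dvdn1 => h2.
by rewrite (eqP h2) in hp.
Qed.

Definition next_prime (m : nat) : nat := ex_minn (exists_prime_gt m).

(* nth_prime k = p_k, the k-th prime with p_1 = 2 (nth_prime 0 := 1, unused) *)
Fixpoint nth_prime (k : nat) : nat :=
  match k with
  | 0 => 1
  | k'.+1 => next_prime (nth_prime k')
  end.

Definition gap (k : nat) : nat := nth_prime k.+1 - nth_prime k.

Definition isqrt (n : nat) : nat := Nat.sqrt n.

(* If d = p_{n+1} - p_n and s = isqrt p_n, then p_n < (s + 1)^2, so the hypothesis
   d^2 < 2 p_{n+1} = 2 (p_n + d) gives d (d - 2) < 2 (s + 1)^2.  Were d >= 2 s + 1,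
   the left side would be at least 4 s^2 - 1, which is impossible once s >= 3.  If
   d = 2 s, the same hypothesis reads p_n > 2 s^2 - 2 s >= s^2, which puts
   p_{n+1} = p_n + 2 s between (s + 1)^2 and (s + 2)^2.  The first four gaps,
   where p_n < 9, are checked directly. *)

From Stdlib Require Import PeanoNat Lia.
From mathcomp Require Import all_boot.
From mathcomp Require Import zify.

Lemma isqrt_bounds n : isqrt n * isqrt n <= n < (isqrt n).+1 * (isqrt n).+1.
Proof.
have [lo hi] := Nat.sqrt_spec n (Nat.le_0_l n).
by apply/andP; split; rewrite /isqrt; lia.
Qed.

Lemma isqrt_eq n s : s * s <= n < s.+1 * s.+1 -> isqrt n = s.
Proof. by case/andP=> lo hi; apply: Nat.sqrt_unique; lia. Qed.

Lemma leq_twice_isqrt p d :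
  9 <= p -> d ^ 2 < 2 * (p + d) -> d <= 2 * isqrt p.
Proof.
move=> p_ge9 d_sq; have /andP[s_lo s_hi] := isqrt_bounds p.
have s_ge3 : 3 <= isqrt p by rewrite leqNgt; apply/negP => s_lt3; nia.
rewrite leqNgt; apply/negP => d_gt; nia.
Qed.

Lemma isqrt_add_twice_isqrt p :
  4 <= p -> (2 * isqrt p) ^ 2 < 2 * (p + 2 * isqrt p) ->
  isqrt (p + 2 * isqrt p) = (isqrt p).+1.
Proof.
move=> p_ge4 d_sq; have /andP[s_lo s_hi] := isqrt_bounds p.
have s_ge2 : 2 <= isqrt p by rewrite leqNgt; apply/negP => s_lt2; nia.
by apply: isqrt_eq; apply/andP; split; nia.
Qed.

Lemma next_prime_gt m : m < next_prime m.
Proof. by rewrite /next_prime; case: ex_minnP => q /andP[]. Qed.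

Lemma next_prime_eq m q : m < q -> prime q ->
  all (fun r => ~~ prime r) (iota m.+1 (q - m.+1)) -> next_prime m = q.
Proof.
move=> m_lt_q q_prime /allP no_prime_between.
rewrite /next_prime; case: ex_minnP => r /andP[m_lt_r r_prime] r_min.
apply/eqP; rewrite eqn_leq r_min ?m_lt_q //= leqNgt; apply/negP => r_lt_q.
have r_between : r \in iota m.+1 (q - m.+1) by rewrite mem_iota; lia.
by move: (no_prime_between r r_between); rewrite r_prime.
Qed.

Lemma nth_prime1 : nth_prime 1 = 2. Proof. exact: next_prime_eq. Qed.
Lemma nth_prime2 : nth_prime 2 = 3. Proof. by rewrite /= -/(nth_prime 1) nth_prime1; apply: next_prime_eq. Qed.
Lemma nth_prime3 : nth_prime 3 = 5. Proof. by rewrite /= -/(nth_prime 2) nth_prime2; apply: next_prime_eq. Qed.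
Lemma nth_prime4 : nth_prime 4 = 7. Proof. by rewrite /= -/(nth_prime 3) nth_prime3; apply: next_prime_eq. Qed.
Lemma nth_prime5 : nth_prime 5 = 11. Proof. by rewrite /= -/(nth_prime 4) nth_prime4; apply: next_prime_eq. Qed.

Lemma nth_prime_mono : {homo nth_prime : m n / m <= n}.
Proof. by apply: homo_leq => [//|k m n|k]; [apply: leq_trans | apply/ltnW/next_prime_gt]. Qed.

Lemma nth_primeS_gap k : nth_prime k.+1 = nth_prime k + gap k.
Proof. by rewrite /gap subnKC // ltnW // next_prime_gt. Qed.

Theorem theorem6p1 :
  (forall k, 1 <= k -> (gap k) ^ 2 < 2 * nth_prime k.+1) ->
  forall n, 1 <= n ->
    gap n <= 2 * isqrt (nth_prime n) /\
    (gap n = 2 * isqrt (nth_prime n) ->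
       isqrt (nth_prime n.+1) = (isqrt (nth_prime n)).+1).
Proof.
move=> gap_sq n n_ge1.
have [n_lt5 | n_ge5] := ltnP n 5.
  case: n n_ge1 n_lt5 => [|[|[|[|[|]]]]] // _ _; rewrite /gap.
  - by rewrite nth_prime1 nth_prime2.
  - by rewrite nth_prime2 nth_prime3.
  - by rewrite nth_prime3 nth_prime4.
  - by rewrite nth_prime4 nth_prime5.
have p_ge9 : 9 <= nth_prime n.
  by have := nth_prime_mono _ _ n_ge5; rewrite nth_prime5; apply: leq_trans.
have := gap_sq n n_ge1; rewrite nth_primeS_gap => d_sq.
split; first exact: leq_twice_isqrt.
move=> d_eq; rewrite d_eq in d_sq *.
by apply: isqrt_add_twice_isqrt => //; exact: leq_trans _ p_ge9.
Qed.
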